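(* Let $f:\mathbb R\to B_2$ have a left limit at every point of $\mathbb R\cup\{\infty\}$ and be left continuous at every point of $\mathbb R$, and extend $f$ to $\mathbb R\cup\{\infty\}$ by $f(\infty)=f(\infty-0)$. Let $\mu:\mathrm{Sym}^-\to B_2$ be the function given by $\mu\big([[a_1,b_1))\Delta\cdots\Delta[[a_n,b_n))\big)=f(a_1)\oplus f(b_1)\oplus\cdots\oplus f(a_n)\oplus f(b_n)$ for $a_1,\dots,a_n,b_1,\dots,b_n\in\mathbb R\cup\{\infty\}$. Then $\mu$ is a measure.
   Context: $B_2=\{0,1\}$, $\oplus$ addition modulo 2, $\Delta$ symmetric difference. For $t\in\mathbb R\cup\{\infty\}$, $f$ has a left limit at $t$ if there is $t'<t$ (real) such that $f$ is constant on $(t',t)$; this constant is $f(t-0)$. $f$ is left continuous at $t\in\mathbb R$ if $f(t)=f(t-0)$. For $a,b\in\mathbb R\cup\{\infty\}$ the symmetric interval is $[[a,b))=[a,b)$ if $a<b$, $=[b,a)$ if $b<a$, $=\emptyset$ if $a=b$ (subsets of $\mathbb R$). $\mathrm{Sym}^-$ is the family of subsets of $\mathbb R$ generated by these intervals under $\Delta$ and $\cap$; its elements are finite symmetric differences of such intervals. A function $\mu:\mathrm{Sym}^-\to B_2$ is a measure if for every sequence of pairwise disjoint sets of $\mathrm{Sym}^-$ whose union lies in $\mathrm{Sym}^-$, only finitely many have $\mu$-value 1 and $\mu$ of the union is their number modulo 2. *)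

(* concrete reals R; R ∪ {∞} is [option R] with [None] = ∞;
   B_2 = bool, ⊕ = xorb; subsets of R are predicates [R -> Prop]. *)
From Stdlib Require Import Reals List.
Open Scope R_scope.

Definition symint (a b : option R) : R -> Prop :=
  fun x => match a, b with
  | Some a, Some b => (a <= x < b) \/ (b <= x < a)
  | Some a, None => a <= x
  | None, Some b => b <= x
  | None, None => False
  end.

Definition symdiff (S T : R -> Prop) : R -> Prop :=
  fun x => (S x /\ ~ T x) \/ (T x /\ ~ S x).

Definition setI (S T : R -> Prop) : R -> Prop := fun x => S x /\ T x.

Inductive SymM : (R -> Prop) -> Prop :=
| SymM_int : forall a b, SymM (symint a b)
| SymM_D : forall S T, SymM S -> SymM T -> SymM (symdiff S T)
| SymM_I : forall S T, SymM S -> SymM T -> SymM (setI S T).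

Definition symdiff_list (l : list (option R * option R)) : R -> Prop :=
  fold_right (fun p S => symdiff (symint (fst p) (snd p)) S) (fun _ => False) l.

Definition left_lim_at (f : R -> bool) (t : option R) (c : bool) : Prop :=
  match t with
  | Some s => exists t', t' < s /\ forall x, t' < x < s -> f x = c
  | None => exists t', forall x, t' < x -> f x = c
  end.

Definition fext (f : R -> bool) (finf : bool) (t : option R) : bool :=
  match t with Some s => f s | None => finf end.

Definition xor_upto (mu : (R -> Prop) -> bool) (A : nat -> R -> Prop) (N : nat) : bool :=
  fold_right (fun n b => xorb (mu (A n)) b) false (seq 0 N).

Definition is_measure (mu : (R -> Prop) -> bool) : Prop :=
  forall A : nat -> R -> Prop,
    (forall n, SymM (A n)) ->
    (forall i j, i <> j -> forall x, A i x -> A j x -> False) ->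
    SymM (fun x => exists n, A n x) ->
    exists N : nat,
      (forall n, (N <= n)%nat -> mu (A n) = false) /\
      mu (fun x => exists n, A n x) = xor_upto mu A N.

(** Every set of [Sym^-] is a finite symmetric difference of intervals [[a,b)),
    and the defining formula makes [μ] additive on such representations; in
    particular [μ] is additive on disjoint pairs and [μ (S ∩ [y,z)) = 0] whenever
    [f] is constant on [[y,z]], since every endpoint then contributes the same
    value twice.  Truncate all sets at [x] and run a real induction on [x]: the
    additivity statement holds trivially below a lower bound of the union.  It
    passes from [x] to a right neighbourhood of [x] because every set of [Sym^-]
    is constant on some [[x,x+d)], so at most one [A_k] (the one containing [x])
    changes, and it changes exactly as the union does.  It passes to [x] from its
    left by left continuity of [f] at [x], and finally to [∞] because [f] is
    eventually constant. *)

From Stdlib Require Import Bool Reals List Lra Lia Classical.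
From Stdlib Require Import FunctionalExtensionality PropExtensionality.
Open Scope R_scope.

Lemma set_ext (S T : R -> Prop) : (forall x, S x <-> T x) -> S = T.
Proof.
  intro H; apply functional_extensionality; intro x.
  apply propositional_extensionality; auto.
Qed.

Definition ole (s t : option R) : Prop :=
  match s, t with
  | Some a, Some b => a <= b
  | _, None => True
  | None, Some _ => False
  end.

Definition below (h : option R) (t : R) : Prop :=
  match h with Some b => t < b | None => True end.

Definition omin (h k : option R) : option R :=
  match h, k with
  | Some a, Some b => Some (Rmin a b)
  | Some a, None => Some a
  | None, _ => k
  end.

Definition ico (a : R) (h : option R) : R -> Prop := fun t => a <= t /\ below h t.

Definition trunc (S : R -> Prop) (h : option R) : R -> Prop := fun t => S t /\ below h t.

Definition in_window (y : R) (h t : option R) : Prop := ole (Some y) t /\ ole t h.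

Lemma ole_trans s t u : ole s t -> ole t u -> ole s u.
Proof. destruct s, t, u; simpl; tauto || lra. Qed.

Lemma ole_of_below h a : below h a -> ole (Some a) h.
Proof. destruct h; simpl; auto; lra. Qed.

Lemma below_le h a t : a <= t -> below h t -> below h a.
Proof. destruct h; simpl; auto; lra. Qed.

Lemma below_lt_ole h t y : t < y -> ole (Some y) h -> below h t.
Proof. destruct h; simpl; auto; lra. Qed.

Lemma below_omin h k t : below (omin h k) t <-> below h t /\ below k t.
Proof.
  destruct h as [a|], k as [b|]; simpl; try tauto.
  unfold Rmin; destruct (Rle_dec a b); split; intros; lra.
Qed.

Lemma ole_omin_r h k : ole (omin h k) k.
Proof. destruct h as [a|], k as [b|]; simpl; auto; [apply Rmin_r | lra]. Qed.

Lemma ico_inter a h b k : setI (ico a h) (ico b k) = ico (Rmax a b) (omin h k).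
Proof.
  apply set_ext; intro t; unfold setI, ico; rewrite below_omin.
  assert (Hmax : Rmax a b <= t <-> a <= t /\ b <= t)
    by (unfold Rmax; destruct (Rle_dec a b); split; intros; lra).
  rewrite Hmax; tauto.
Qed.

Lemma symint_as_ico a b : exists c h, ole (Some c) h /\ symint a b = ico c h.
Proof.
  destruct a as [a|], b as [b|]; unfold symint, ico; simpl.
  - destruct (Rle_dec a b).
    + exists a, (Some b); split; [simpl; lra|].
      apply set_ext; intro t; simpl; lra.
    + exists b, (Some a); split; [simpl; lra|].
      apply set_ext; intro t; simpl; lra.
  - exists a, None; split; [exact I|]. apply set_ext; intro t; simpl; tauto.
  - exists b, None; split; [exact I|]. apply set_ext; intro t; simpl; tauto.
  - exists 0, (Some 0); split; [simpl; lra|]. apply set_ext; intro t; simpl; lra.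
Qed.

Lemma ico_as_symint c h : ole (Some c) h -> ico c h = symint (Some c) h.
Proof.
  intro Hch; apply set_ext; intro t; unfold ico, symint.
  destruct h; simpl in *; [lra | tauto].
Qed.

Lemma symint_inter_ico a b y h : ole (Some y) h ->
  exists r, symint (fst r) (snd r) = setI (symint a b) (ico y h)
         /\ in_window y h (fst r) /\ in_window y h (snd r).
Proof.
  intro Hyh.
  destruct (symint_as_ico a b) as [c [k [_ ->]]].
  rewrite ico_inter.
  assert (Hlo : y <= Rmax c y) by apply Rmax_r.
  assert (Hhi : ole (omin k h) h) by apply ole_omin_r.
  destruct (classic (below (omin k h) (Rmax c y))) as [Hne | Hemp].
  - assert (Hle : ole (Some (Rmax c y)) (omin k h)) by (apply ole_of_below; auto).
    exists (Some (Rmax c y), omin k h); simpl.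
    split; [symmetry; apply ico_as_symint; auto|].
    assert (Hy : ole (Some y) (Some (Rmax c y))) by exact Hlo.
    split; split; eauto using ole_trans.
  - exists (Some y, Some y); simpl.
    split; [|split; split; simpl; auto; lra].
    apply set_ext; intro t; unfold symint, ico; split; [lra|].
    intros [H1 H2]; exfalso; apply Hemp; eapply below_le; eauto.
Qed.

Lemma setI_symdiff_l S T W : setI (symdiff S T) W = symdiff (setI S W) (setI T W).
Proof. apply set_ext; intro t; unfold setI, symdiff; tauto. Qed.

Lemma setI_symdiff_r S T W : setI S (symdiff T W) = symdiff (setI S T) (setI S W).
Proof. apply set_ext; intro t; unfold setI, symdiff; tauto. Qed.

Lemma symdiff_assoc S T W : symdiff (symdiff S T) W = symdiff S (symdiff T W).
Proof.
  apply set_ext; intro t; unfold symdiff.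
  destruct (classic (S t)), (classic (T t)), (classic (W t)); tauto.
Qed.

Lemma symdiff_list_cons p l :
  symdiff_list (p :: l) = symdiff (symint (fst p) (snd p)) (symdiff_list l).
Proof. reflexivity. Qed.

Lemma symdiff_list_app l1 l2 :
  symdiff_list (l1 ++ l2) = symdiff (symdiff_list l1) (symdiff_list l2).
Proof.
  induction l1 as [|p l1 IH]; simpl app.
  - apply set_ext; intro t; unfold symdiff; simpl; tauto.
  - rewrite !symdiff_list_cons, IH; symmetry; apply symdiff_assoc.
Qed.

Lemma symdiff_list_inter_ico l y h : ole (Some y) h ->
  exists l', symdiff_list l' = setI (symdiff_list l) (ico y h)
          /\ Forall (fun p => in_window y h (fst p) /\ in_window y h (snd p)) l'.
Proof.
  intro Hyh; induction l as [|[a b] l [l' [Hl' Fl']]].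
  - exists nil; split; [|constructor].
    apply set_ext; intro t; unfold setI; simpl; tauto.
  - destruct (symint_inter_ico a b y h Hyh) as [r [Hr Fr]].
    exists (r :: l'); split; [|constructor; auto].
    rewrite !symdiff_list_cons, setI_symdiff_l, Hr, Hl'; reflexivity.
Qed.

Definition representable (S : R -> Prop) : Prop := exists l, S = symdiff_list l.

Lemma representable_symint a b : representable (symint a b).
Proof.
  exists ((a, b) :: nil); rewrite symdiff_list_cons.
  apply set_ext; intro t; unfold symdiff; simpl; tauto.
Qed.

Lemma representable_symdiff S T :
  representable S -> representable T -> representable (symdiff S T).
Proof. intros [l1 ->] [l2 ->]; exists (l1 ++ l2); symmetry; apply symdiff_list_app. Qed.

Lemma representable_inter_symint S a b :
  representable S -> representable (setI S (symint a b)).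
Proof.
  intros [l ->].
  destruct (symint_as_ico a b) as [c [h [Hch ->]]].
  destruct (symdiff_list_inter_ico l c h Hch) as [l' [Hl' _]].
  exists l'; auto.
Qed.

Lemma representable_setI S T :
  representable S -> representable T -> representable (setI S T).
Proof.
  intros HS [l ->]; induction l as [|[a b] l IH].
  - exists nil; apply set_ext; intro t; unfold setI; simpl; tauto.
  - rewrite symdiff_list_cons, setI_symdiff_r.
    apply representable_symdiff; auto.
    apply representable_inter_symint; auto.
Qed.

Lemma representable_SymM S : SymM S -> representable S.
Proof.
  induction 1.
  - apply representable_symint.
  - apply representable_symdiff; auto.
  - apply representable_setI; auto.
Qed.

Lemma trunc_None S : trunc S None = S.
Proof. apply set_ext; intro t; unfold trunc; simpl; tauto. Qed.

Lemma representable_trunc S h : representable S -> representable (trunc S h).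
Proof.
  intro HS; destruct h as [x|]; [|rewrite trunc_None; auto].
  replace (trunc S (Some x)) with (symdiff S (setI S (symint (Some x) None))).
  - apply representable_symdiff; auto; apply representable_inter_symint; auto.
  - apply set_ext; intro t; unfold symdiff, setI, trunc, symint; simpl.
    destruct (Rle_dec x t); [assert (~ t < x) by lra | assert (t < x) by lra]; tauto.
Qed.

Lemma trunc_gap S x y : x <= y -> (forall t, x <= t < y -> ~ S t) ->
  trunc S (Some y) = trunc S (Some x).
Proof.
  intros Hxy Hgap; apply set_ext; intro t; unfold trunc; simpl.
  split; intros [HS Ht]; split; auto; [|lra].
  destruct (Rlt_le_dec t x); auto.
  exfalso; apply (Hgap t); auto; lra.
Qed.

Definition endpoint_parity (f : R -> bool) (finf : bool)
  (l : list (option R * option R)) : bool :=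
  fold_right (fun p b => xorb (xorb (fext f finf (fst p)) (fext f finf (snd p))) b)
             false l.

Lemma endpoint_parity_app f finf l1 l2 :
  endpoint_parity f finf (l1 ++ l2)
  = xorb (endpoint_parity f finf l1) (endpoint_parity f finf l2).
Proof.
  unfold endpoint_parity; induction l1 as [|p l1 IH]; simpl; auto.
  rewrite IH; symmetry; apply xorb_assoc_reverse.
Qed.

Lemma endpoint_parity_window_const f finf y h c l :
  (forall t, in_window y h t -> fext f finf t = c) ->
  Forall (fun p => in_window y h (fst p) /\ in_window y h (snd p)) l ->
  endpoint_parity f finf l = false.
Proof.
  intros Hc HF; induction HF as [|p l [H1 H2] _ IH]; simpl; auto.
  unfold endpoint_parity in *; simpl.
  rewrite IH, (Hc _ H1), (Hc _ H2); now destruct c.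
Qed.

(* The hypothesis of the theorem only covers nonempty lists, but the empty set
   is also [[0,0)). *)
Lemma mu_eq_endpoint_parity f finf (mu : (R -> Prop) -> bool) :
  (forall l, l <> nil -> mu (symdiff_list l) = endpoint_parity f finf l) ->
  forall l, mu (symdiff_list l) = endpoint_parity f finf l.
Proof.
  intros Hmu [|p l]; [|apply Hmu; discriminate].
  replace (symdiff_list nil) with (symdiff_list ((Some 0, Some 0) :: nil)).
  - rewrite Hmu by discriminate; simpl; now destruct (f 0).
  - rewrite symdiff_list_cons; apply set_ext; intro t; unfold symdiff, symint; simpl.
    split; [intros [[H _] | [H _]]; lra | tauto].
Qed.

Section MeasureOnRepresentable.

Variables (f : R -> bool) (finf : bool) (mu : (R -> Prop) -> bool).
Hypothesis mu_symdiff_list :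
  forall l, mu (symdiff_list l) = endpoint_parity f finf l.

Lemma mu_empty : mu (fun _ => False) = false.
Proof. exact (mu_symdiff_list nil). Qed.

Lemma mu_symdiff S T :
  representable S -> representable T -> mu (symdiff S T) = xorb (mu S) (mu T).
Proof.
  intros [l1 ->] [l2 ->].
  rewrite <- symdiff_list_app, !mu_symdiff_list; apply endpoint_parity_app.
Qed.

Lemma mu_disjoint_union S T :
  representable S -> representable T -> (forall t, S t -> T t -> False) ->
  mu (fun t => S t \/ T t) = xorb (mu S) (mu T).
Proof.
  intros HS HT HST; rewrite <- mu_symdiff by auto; f_equal.
  apply set_ext; intro t; unfold symdiff; specialize (HST t); tauto.
Qed.

Lemma mu_inter_ico_const S y h c :
  representable S -> ole (Some y) h ->
  (forall t, in_window y h t -> fext f finf t = c) ->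
  mu (setI S (ico y h)) = false.
Proof.
  intros [l ->] Hyh Hc.
  destruct (symdiff_list_inter_ico l y h Hyh) as [l' [<- Hl']].
  rewrite mu_symdiff_list; eapply endpoint_parity_window_const; eauto.
Qed.

Lemma mu_trunc_split S y h : representable S -> ole (Some y) h ->
  mu (trunc S h) = xorb (mu (trunc S (Some y))) (mu (setI S (ico y h))).
Proof.
  intros HS Hyh.
  rewrite <- (mu_disjoint_union (trunc S (Some y)) (setI S (ico y h))).
  - f_equal; apply set_ext; intro t; unfold trunc, setI, ico; simpl.
    pose proof (below_lt_ole h t y).
    destruct (Rlt_le_dec t y); [|assert (~ t < y) by lra]; tauto.
  - apply representable_trunc; auto.
  - rewrite ico_as_symint by auto; apply representable_inter_symint; auto.
  - intros t [_ H1] [_ [H2 _]]; simpl in H1; lra.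
Qed.

Lemma mu_trunc_const S y h c :
  representable S -> ole (Some y) h ->
  (forall t, in_window y h t -> fext f finf t = c) ->
  mu (trunc S h) = mu (trunc S (Some y)).
Proof.
  intros HS Hyh Hc.
  rewrite (mu_trunc_split S y h), (mu_inter_ico_const S y h c) by auto.
  apply xorb_false_r.
Qed.

Lemma mu_trunc_grow S x y :
  representable S -> x <= y -> (forall t, x <= t < y -> S t) ->
  mu (trunc S (Some y)) = xorb (mu (trunc S (Some x))) (mu (ico x (Some y))).
Proof.
  intros HS Hxy HSxy.
  rewrite (mu_trunc_split S x (Some y)) by (simpl; auto).
  do 2 f_equal; apply set_ext; intro t; unfold setI, ico; simpl.
  split; [tauto|]; intros Ht; split; auto; apply HSxy; lra.
Qed.

End MeasureOnRepresentable.

Lemma xor_upto_S mu A N : xor_upto mu A (S N) = xorb (xor_upto mu A N) (mu (A N)).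
Proof.
  unfold xor_upto; rewrite seq_S, fold_right_app; simpl.
  generalize (seq 0 N) as s; induction s as [|n s IH]; simpl.
  - now destruct (mu (A N)).
  - now rewrite IH, xorb_assoc_reverse.
Qed.

Lemma xor_upto_ext mu A B N :
  (forall n, (n < N)%nat -> mu (A n) = mu (B n)) -> xor_upto mu A N = xor_upto mu B N.
Proof.
  intro HAB; induction N as [|N IH]; auto.
  rewrite !xor_upto_S, HAB by lia.
  rewrite IH; [reflexivity|]; intros n Hn; apply HAB; lia.
Qed.

Lemma xor_upto_stable mu A N N' :
  (forall n, (N <= n)%nat -> mu (A n) = false) -> (N <= N')%nat ->
  xor_upto mu A N' = xor_upto mu A N.
Proof.
  intros HA HN; induction HN as [|N' HN IH]; auto.
  rewrite xor_upto_S, IH, HA by auto; apply xorb_false_r.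
Qed.

Lemma xor_upto_flip mu A B N k c : (k < N)%nat ->
  (forall n, n <> k -> mu (B n) = mu (A n)) -> mu (B k) = xorb (mu (A k)) c ->
  xor_upto mu B N = xorb (xor_upto mu A N) c.
Proof.
  intros Hk HAB Hflip; induction N as [|N IH]; [lia|].
  rewrite !xor_upto_S.
  destruct (Nat.eq_dec k N) as [<- | HkN].
  - rewrite (xor_upto_ext mu B A k), Hflip by (intros n Hn; apply HAB; lia).
    now destruct (xor_upto mu A k), (mu (A k)), c.
  - rewrite IH, HAB by lia.
    now destruct (xor_upto mu A N), (mu (A N)), c.
Qed.

Definition right_locally_constant (S : R -> Prop) : Prop :=
  forall x, exists d, 0 < d /\ forall y, x <= y < x + d -> (S y <-> S x).

Lemma right_locally_constant_ico a h : right_locally_constant (ico a h).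
Proof.
  intro x; unfold ico; destruct h as [b|]; simpl.
  - destruct (Rlt_dec x a); [|destruct (Rlt_dec x b)].
    + exists (a - x); split; [lra|]; intros; lra.
    + exists (b - x); split; [lra|]; intros; lra.
    + exists 1; split; [lra|]; intros; lra.
  - destruct (Rlt_dec x a).
    + exists (a - x); split; [lra|]; intros; split; intros; lra.
    + exists 1; split; [lra|]; intros; split; intros; split; auto; lra.
Qed.

Lemma right_locally_constant_combine (op : Prop -> Prop -> Prop) S T :
  (forall P Q P' Q', (P <-> P') -> (Q <-> Q') -> (op P Q <-> op P' Q')) ->
  right_locally_constant S -> right_locally_constant T ->
  right_locally_constant (fun t => op (S t) (T t)).
Proof.
  intros Hop HS HT x.
  destruct (HS x) as [d1 [Hd1 HS1]], (HT x) as [d2 [Hd2 HT2]].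
  exists (Rmin d1 d2); split; [apply Rmin_glb_lt; auto|].
  intros y Hy; pose proof (Rmin_l d1 d2); pose proof (Rmin_r d1 d2).
  apply Hop; [apply HS1 | apply HT2]; lra.
Qed.

Lemma right_locally_constant_SymM S : SymM S -> right_locally_constant S.
Proof.
  induction 1.
  - destruct (symint_as_ico a b) as [c [h [_ ->]]]; apply right_locally_constant_ico.
  - apply (right_locally_constant_combine (fun P Q => (P /\ ~ Q) \/ (Q /\ ~ P)));
      auto; intros; tauto.
  - apply (right_locally_constant_combine and); auto; intros; tauto.
Qed.

Lemma SymM_bounded_below S : SymM S -> exists m, forall t, S t -> m <= t.
Proof.
  induction 1 as [a b | S T _ [m1 H1] _ [m2 H2] | S T _ [m1 H1] _ _].
  - destruct (symint_as_ico a b) as [c [h [_ ->]]].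
    exists c; intros t [Ht _]; auto.
  - exists (Rmin m1 m2).
    pose proof (Rmin_l m1 m2); pose proof (Rmin_r m1 m2).
    intros t [[Ht _] | [Ht _]]; [apply H1 in Ht | apply H2 in Ht]; lra.
  - exists m1; intros t [Ht _]; auto.
Qed.

(* If [P] failed somewhere, [sup {s | P holds on (-oo, s]}] would exist and
   both closure steps would contradict it. *)
Lemma real_induction (P : R -> Prop) (m : R) :
  (forall x, x <= m -> P x) ->
  (forall x, P x -> exists d, 0 < d /\ forall y, x < y < x + d -> P y) ->
  (forall x, (exists d, 0 < d /\ forall y, x - d < y < x -> P y) -> P x) ->
  forall x, P x.
Proof.
  intros Hlow Hright Hleft x0; apply NNPP; intro Hx0.
  set (E := fun s => forall y, y <= s -> P y).
  assert (Hbound : bound E).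
  { exists x0; intros s Hs; destruct (Rle_dec s x0); auto.
    exfalso; apply Hx0, Hs; lra. }
  destruct (completeness E Hbound) as [s [Hub Hlub]]; [exists m; exact Hlow|].
  assert (Hlt : forall y, y < s -> P y).
  { intros y Hy; apply NNPP; intro Hn.
    assert (s <= y); [|lra].
    apply Hlub; intros e He; destruct (Rle_dec e y); auto.
    exfalso; apply Hn, He; lra. }
  assert (Hs : P s) by (apply Hleft; exists 1; split; [lra|]; intros; apply Hlt; lra).
  destruct (Hright s Hs) as [d [Hd Hd']].
  assert (HE : E (s + d / 2)).
  { intros y Hy; destruct (Rlt_le_dec y s); auto.
    destruct (Req_dec y s) as [->|]; auto; apply Hd'; lra. }
  specialize (Hub _ HE); lra.
Qed.

Section AdditivityBelow.

Variables (f : R -> bool) (finf : bool) (mu : (R -> Prop) -> bool).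
Hypothesis mu_symdiff_list :
  forall l, mu (symdiff_list l) = endpoint_parity f finf l.

Variable A : nat -> R -> Prop.
Hypothesis A_SymM : forall n, SymM (A n).
Hypothesis A_disjoint : forall i j, i <> j -> forall x, A i x -> A j x -> False.
Let U := fun x => exists n, A n x.
Hypothesis U_SymM : SymM U.

Definition additive_below (h : option R) : Prop :=
  exists N, (forall n, (N <= n)%nat -> mu (trunc (A n) h) = false) /\
            mu (trunc U h) = xor_upto mu (fun n => trunc (A n) h) N.

Let A_representable n : representable (A n).
Proof. apply representable_SymM, A_SymM. Qed.

Let U_representable : representable U.
Proof. apply representable_SymM, U_SymM. Qed.

Let A_sub_U n t : A n t -> U t.
Proof. now exists n. Qed.

Lemma additive_below_low m x :
  (forall t, U t -> m <= t) -> x <= m -> additive_below (Some x).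
Proof.
  intros Hm Hx.
  assert (Hempty : forall S, (forall t, S t -> U t) -> trunc S (Some x) = fun _ => False).
  { intros S HS; apply set_ext; intro t; unfold trunc; simpl; split; [|tauto].
    intros [H1 H2]; specialize (Hm t (HS t H1)); lra. }
  exists 0%nat; split.
  - intros n _; rewrite Hempty by apply A_sub_U; eapply mu_empty; eauto.
  - rewrite Hempty by auto; eapply mu_empty; eauto.
Qed.

Lemma additive_below_transfer y h c : ole (Some y) h ->
  (forall t, in_window y h t -> fext f finf t = c) ->
  additive_below (Some y) -> additive_below h.
Proof.
  intros Hyh Hc [N [HN HNU]].
  assert (Htr : forall S, representable S -> mu (trunc S h) = mu (trunc S (Some y)))
    by (intros; eapply mu_trunc_const; eauto).
  exists N; split.
  - intros n Hn; rewrite Htr; auto.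
  - rewrite Htr, HNU by auto.
    apply xor_upto_ext; intros n _; symmetry; apply Htr; auto.
Qed.

Lemma additive_below_right_outside x : ~ U x ->
  additive_below (Some x) ->
  exists d, 0 < d /\ forall y, x < y < x + d -> additive_below (Some y).
Proof.
  intros Hx [N [HN HNU]].
  destruct (right_locally_constant_SymM U U_SymM x) as [d [Hd HUd]].
  exists d; split; auto; intros y Hy.
  assert (Hgap : forall S, (forall t, S t -> U t) -> trunc S (Some y) = trunc S (Some x)).
  { intros S HS; apply trunc_gap; [lra|].
    intros t Ht HSt; apply Hx, (HUd t); auto; lra. }
  exists N; split.
  - intros n Hn; rewrite Hgap by apply A_sub_U; auto.
  - rewrite Hgap, HNU by auto.
    apply xor_upto_ext; intros n _; rewrite Hgap by apply A_sub_U; reflexivity.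
Qed.

(* Right of a point of [A k], only [A k] and the union grow, both by [[x,y)]. *)
Lemma additive_below_right_inside x k : A k x ->
  additive_below (Some x) ->
  exists d, 0 < d /\ forall y, x < y < x + d -> additive_below (Some y).
Proof.
  intros Hk [N [HN HNU]].
  destruct (right_locally_constant_SymM _ (A_SymM k) x) as [d [Hd HAk]].
  exists d; split; auto; intros y Hy.
  assert (Hsub : forall t, x <= t < y -> A k t)
    by (intros t Ht; apply (HAk t); auto; lra).
  assert (Hothers : forall n, n <> k ->
            mu (trunc (A n) (Some y)) = mu (trunc (A n) (Some x))).
  { intros n Hnk; rewrite (trunc_gap (A n) x y); auto; [lra|].
    intros t Ht Hn; apply (A_disjoint n k Hnk t Hn (Hsub t Ht)). }
  assert (Hgrow : forall S, representable S -> (forall t, x <= t < y -> S t) ->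
            mu (trunc S (Some y)) = xorb (mu (trunc S (Some x))) (mu (ico x (Some y))))
    by (intros; eapply mu_trunc_grow; eauto; lra).
  exists (Nat.max N (S k)); split.
  - intros n Hn; rewrite Hothers by lia; apply HN; lia.
  - rewrite (Hgrow U), HNU by (auto; intros t Ht; exists k; auto).
    rewrite <- (xor_upto_stable mu _ N (Nat.max N (S k))) by (auto; lia).
    symmetry; apply xor_upto_flip with k; auto; lia.
Qed.

Lemma additive_below_right x : additive_below (Some x) ->
  exists d, 0 < d /\ forall y, x < y < x + d -> additive_below (Some y).
Proof.
  destruct (classic (U x)) as [[k Hk] | Hx].
  - apply additive_below_right_inside with k; auto.
  - apply additive_below_right_outside; auto.
Qed.

Lemma additive_below_left x : left_lim_at f (Some x) (f x) ->
  (exists d, 0 < d /\ forall y, x - d < y < x -> additive_below (Some y)) ->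
  additive_below (Some x).
Proof.
  intros [t' [Ht' Hft']] [d [Hd HP]].
  pose proof (Rmax_l (x - d) t'); pose proof (Rmax_r (x - d) t').
  assert (Hmax : Rmax (x - d) t' < x) by (apply Rmax_lub_lt; lra).
  set (y := (Rmax (x - d) t' + x) / 2).
  apply (additive_below_transfer y (Some x) (f x)).
  - simpl; unfold y; lra.
  - intros [s|] [H1 H2]; simpl in *; [|contradiction].
    destruct (Req_dec s x) as [->|]; auto.
    apply Hft'; unfold y in H1; lra.
  - apply HP; unfold y; lra.
Qed.

Lemma additive_below_everywhere :
  (forall s, left_lim_at f (Some s) (f s)) -> forall x, additive_below (Some x).
Proof.
  intro Hcont.
  destruct (SymM_bounded_below U U_SymM) as [m Hm].
  apply (real_induction (fun x => additive_below (Some x)) m).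
  - intros x Hx; apply additive_below_low with m; auto.
  - apply additive_below_right.
  - intro x; apply additive_below_left, Hcont.
Qed.

Lemma additive_below_infinity :
  (forall s, left_lim_at f (Some s) (f s)) -> left_lim_at f None finf ->
  additive_below None.
Proof.
  intros Hcont [t' Ht'].
  apply (additive_below_transfer (t' + 1) None finf);
    [exact I | | apply additive_below_everywhere, Hcont].
  intros [s|] [H1 _]; simpl in *; auto; apply Ht'; lra.
Qed.

End AdditivityBelow.

Theorem theorem6p4 (f : R -> bool) (finf : bool)
  (Hlim : forall t : option R, exists c, left_lim_at f t c)
  (Hcont : forall s : R, left_lim_at f (Some s) (f s))
  (Hinf : left_lim_at f None finf)
  (mu : (R -> Prop) -> bool)
  (Hmu : forall l : list (option R * option R), l <> nil ->
     mu (symdiff_list l) =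
     fold_right (fun p b => xorb (xorb (fext f finf (fst p)) (fext f finf (snd p))) b)
                false l) :
  is_measure mu.
Proof.
  intros A HA Hdisj HU.
  destruct (additive_below_infinity f finf mu (mu_eq_endpoint_parity f finf mu Hmu)
              A HA Hdisj HU Hcont Hinf) as [N [HN HNU]].
  exists N; split.
  - intros n Hn; rewrite <- (trunc_None (A n)); auto.
  - rewrite <- (trunc_None (fun x => exists n, A n x)), HNU.
    apply xor_upto_ext; intros n _; now rewrite trunc_None.
Qed.
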